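(* Let $\mathcal{G}$ be a reaction network with species $X_1,\dots,X_n$ and reactions $\mathbf{y}\to\mathbf{y}'$ ($\mathbf{y},\mathbf{y}'\in\mathbb{Z}^n_{\ge 0}$, $\mathbf{y}\neq\mathbf{y}'$). For every choice of $n$ distinct reactions $\mathbf{y}_1\to\mathbf{y}'_1,\dots,\mathbf{y}_n\to\mathbf{y}'_n$ of $\mathcal{G}$ consider the number $$P=\det(\mathbf{y}_1,\dots,\mathbf{y}_n)\,\det(\mathbf{y}'_1-\mathbf{y}_1,\dots,\mathbf{y}'_n-\mathbf{y}_n),$$ where the determinants are of the $n\times n$ matrices with the indicated columns. Then $\mathcal{G}$ is injective if and only if all such numbers $P$ that are nonzero have the same sign and at least one of them is nonzero.
   Context: A reaction network with species $X_1,\dots,X_n$ is a finite set of reactions $\mathbf{y}\to\mathbf{y}'$ with $\mathbf{y}\ne\mathbf{y}'\in\mathbb{Z}^n_{\ge0}$ (the vectors of stoichiometric coefficients of reactants and products). Given rate constants $\mathbf{k}=(k_{\mathbf{y}\to\mathbf{y}'})$, all positive, the mass-action vector field is $\mathbf{f}(\mathbf{x},\mathbf{k})=\sum_{\mathbf{y}\to\mathbf{y}'}k_{\mathbf{y}\to\mathbf{y}'}\mathbf{x}^{\mathbf{y}}(\mathbf{y}'-\mathbf{y})$ for $\mathbf{x}\in\mathbb{R}^n_{>0}$, where $\mathbf{x}^{\mathbf{y}}=x_1^{y_1}\cdots x_n^{y_n}$. The network is called injective if for every choice of positive rate constants $\mathbf{k}$ the map $\mathbf{x}\mapsto\mathbf{f}(\mathbf{x},\mathbf{k})$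 is injective on $\mathbb{R}^n_{>0}$. *)

From HB Require Import structures.
From mathcomp Require Import all_boot all_order all_algebra.
From mathcomp Require Import reals.
Set Implicit Arguments. Unset Strict Implicit. Unset Printing Implicit Defensive.
Import Order.TTheory GRing.Theory Num.Theory.
Local Open Scope ring_scope.

(* A reaction y -> y' on n species: pair (reactant vector y, product vector y'),
   vectors in Z_{>=0}^n represented as row vectors of naturals. *)
Definition reaction (n : nat) := ('rV[nat]_n * 'rV[nat]_n)%type.

(* A reaction network with m reactions: an injective family G : 'I_m -> reaction n
   (i.e. a finite set of m reactions) with y != y' for each reaction. *)
Definition is_network (n m : nat) (G : 'I_m -> reaction n) : Prop :=
  injective G /\ forall r, (G r).1 != (G r).2.

Definition monom (R : comNzRingType) (n : nat) (x : 'rV[R]_n) (y : 'rV[nat]_n) : R :=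
  \prod_(j < n) x 0 j ^+ y 0 j.

Definition rvec (R : comNzRingType) (n : nat) (r : reaction n) : 'rV[R]_n :=
  \row_j ((r.2 0 j)%:R - (r.1 0 j)%:R).

Definition mass_action (R : comNzRingType) (n m : nat) (G : 'I_m -> reaction n)
  (k : 'I_m -> R) (x : 'rV[R]_n) : 'rV[R]_n :=
  \sum_(r < m) (k r * monom x (G r).1) *: @rvec R n (G r).

Definition pos_orthant (R : realType) (n : nat) : pred 'rV[R]_n :=
  [pred x : 'rV[R]_n | [forall j : 'I_n, 0 < x 0 j]].

Definition injective_network (R : realType) (n m : nat) (G : 'I_m -> reaction n)
  : Prop :=
  forall k : 'I_m -> R, (forall r, 0 < k r) ->
    {in @pos_orthant R n &, injective (@mass_action R n m G k)}.

Definition Pdet (n m : nat) (G : 'I_m -> reaction n) (s : 'I_n -> 'I_m) : int :=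
  \det (\matrix_(i < n, j < n) ((G (s j)).1 0 i)%:Z)
  * \det (\matrix_(i < n, j < n) (@rvec int n (G (s j)) 0 i)).

From HB Require Import structures.
From mathcomp Require Import all_boot all_order all_algebra perm.
From mathcomp Require Import reals ring lra.
From mathcomp.analysis Require Import sequences exp.
Import Order.TTheory GRing.Theory Num.Theory.
Set Implicit Arguments. Unset Strict Implicit. Unset Printing Implicit Defensive.
Local Open Scope ring_scope.

(* Write f(x) = sum_r k_r x^{y_r} (y'_r - y_r).  Any two positive points are
   x and x e^d with d = ln x' - ln x, and the exact identity
     f(x e^d) - f(x) = d (A_w B),   w_r = k_r x^{y_r} (e^{<d,y_r>} - 1)/<d,y_r>,
   holds, where A_w has columns w_r y_r and B has rows y'_r - y_r.  Since every
   positive w arises this way, the network is injective iff det (A_w B) != 0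
   for all positive weights w (injective_networkP).
   Expanding the determinant over all maps f : [n] -> [m] gives
     n! det (A_w B) = F(w) := sum_f (prod_i w_{f i}) Pdet f   (Pdet_sum_det).
   Finally F has no zero on positive weights iff the nonzero Pdet share a
   sign and one exists (Pdet_sum_neq0P): one direction because all terms of F
   then have that sign; the other because each nonzero Pdet s is realised as
   the sign of F by concentrating the weights on the reactions of s, and F,
   being polynomial, cannot change sign without vanishing in between. *)

Definition positive_weights (R : numDomainType) (m : nat) (w : 'I_m -> R) : Prop :=
  forall r, 0 < w r.

Section DeterminantExpansions.
Variables (R : comPzRingType) (n : nat).

Lemma det_permute_cols (A : 'M[R]_n) (s : {perm 'I_n}) :
  \det (\matrix_(i, j) A i (s j)) = (-1) ^+ s * \det A.
Proof.
have -> : \matrix_(i, j) A i (s j) = col_perm s A by apply/matrixP => i j; rewrite !mxE.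
by rewrite col_permE det_mulmx det_perm odd_permV mulrC.
Qed.

Lemma det_permute_rows (A : 'M[R]_n) (s : {perm 'I_n}) :
  \det (\matrix_(i, j) A (s i) j) = (-1) ^+ s * \det A.
Proof.
have -> : \matrix_(i, j) A (s i) j = row_perm s A by apply/matrixP => i j; rewrite !mxE.
by rewrite row_permE det_mulmx det_perm.
Qed.

(* Expansion of det (A B) for a product through an m-dimensional space, summed
   over all maps f : [n] -> [m] (non-injective f contribute zero; grouping the
   injective ones by image gives the Cauchy-Binet formula). *)
Lemma det_mulmx_ffun (m : nat) (A : 'M[R]_(n, m)) (B : 'M[R]_(m, n)) :
  \det (A *m B) = \sum_(f : {ffun 'I_n -> 'I_m})
     (\prod_i A i (f i)) * \det (\matrix_(i, j) B (f i) j).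
Proof.
rewrite /determinant.
transitivity (\sum_(s : 'S_n) \sum_(f : {ffun 'I_n -> 'I_m})
   (-1) ^+ s * ((\prod_i A i (f i)) * \prod_i B (f i) (s i))).
  apply: eq_bigr => s _; rewrite -big_distrr /=; congr (_ * _).
  under eq_bigr do rewrite mxE.
  by rewrite bigA_distr_bigA /=; apply: eq_bigr => f _; rewrite big_split.
rewrite exchange_big; apply: eq_bigr => f _ /=; rewrite big_distrr /=.
apply: eq_bigr => s _; rewrite mulrCA; congr (_ * (_ * _)).
by apply: eq_bigr => i _; rewrite mxE.
Qed.

End DeterminantExpansions.

Section PdetCombinatorics.
Variables (n m : nat) (G : 'I_m -> reaction n).

Lemma eq_Pdet (s t : 'I_n -> 'I_m) : s =1 t -> Pdet G s = Pdet G t.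
Proof.
by move=> st; rewrite /Pdet; congr (_ * _); congr (\det _); apply/matrixP => i j;
  rewrite !mxE st.
Qed.

(* A choice with a repeated reaction has two equal columns, so Pdet vanishes. *)
Lemma Pdet_neq0_inj (s : 'I_n -> 'I_m) : Pdet G s != 0 -> injective s.
Proof.
move=> nz i j sij; apply/eqP; apply: contraNT nz => ij.
rewrite /Pdet -det_tr (@determinant_alternate _ _ _ i j) ?mul0r //.
by move=> k; rewrite !mxE sij.
Qed.

(* Reordering the chosen reactions changes both determinants by the same sign. *)
Lemma Pdet_perm (s : 'I_n -> 'I_m) (p : {perm 'I_n}) :
  Pdet G (fun j => s (p j)) = Pdet G s.
Proof.
rewrite /Pdet.
have -> : \matrix_(i, j) ((G (s (p j))).1 0 i)%:Z =
   \matrix_(i, j) (\matrix_(i, j) ((G (s j)).1 0 i)%:Z) i (p j)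
  by apply/matrixP => i j; rewrite !mxE.
have -> : \matrix_(i, j) (@rvec int n (G (s (p j))) 0 i) =
   \matrix_(i, j) (\matrix_(i, j) (@rvec int n (G (s j)) 0 i)) i (p j)
  by apply/matrixP => i j; rewrite !mxE.
by rewrite !det_permute_cols mulrACA -expr2 sqrr_sign mul1r.
Qed.

Lemma Pdet_codom (s : 'I_n -> 'I_m) (f : 'I_n -> 'I_m) :
  injective s -> (forall i, f i \in codom s) ->
  Pdet G f = 0 \/ Pdet G f = Pdet G s.
Proof.
move=> sinj fs; have [->|nf] := eqVneq (Pdet G f) 0; [by left | right].
have finj := Pdet_neq0_inj nf.
pose g i := iinv (fs i).
have ginj : injective g.
  move=> i j e; apply: finj; rewrite -(f_iinv (fs i)) -(f_iinv (fs j)).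
  by congr (s _); exact: e.
rewrite -(Pdet_perm s (perm ginj)); apply: eq_Pdet => i.
by rewrite permE /g f_iinv.
Qed.

End PdetCombinatorics.

Section Expansion.
Variables (R : comNzRingType) (n m : nat) (G : 'I_m -> reaction n).

Definition reactant_mx (w : 'I_m -> R) : 'M[R]_(n, m) :=
  \matrix_(i, r) (w r * ((G r).1 0 i)%:R).

Definition reaction_mx : 'M[R]_(m, n) := \matrix_(r, j) (@rvec R n (G r) 0 j).

Definition Pdet_sum (w : 'I_m -> R) : R :=
  \sum_(f : {ffun 'I_n -> 'I_m}) (\prod_i w (f i)) * (Pdet G f)%:~R.

(* Contribution of a map g to det (reactant_mx w *m reaction_mx), without the
   weight: the diagonal product of reactant entries times the minor of the
   reaction matrix on the rows g. *)
Definition minor_term (g : {ffun 'I_n -> 'I_m}) : R :=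
  (\prod_i ((G (g i)).1 0 i)%:R) * \det (\matrix_(i, j) reaction_mx (g i) j).

Lemma det_reactant_reaction (w : 'I_m -> R) :
  \det (reactant_mx w *m reaction_mx) =
  \sum_(g : {ffun 'I_n -> 'I_m}) (\prod_i w (g i)) * minor_term g.
Proof.
rewrite det_mulmx_ffun; apply: eq_bigr => g _.
rewrite /minor_term mulrA -big_split /=; congr (_ * _).
by apply: eq_bigr => i _; rewrite mxE.
Qed.

(* Expanding the reactant determinant of Pdet along permutations s expresses
   Pdet g through the minor terms of the reorderings g o s. *)
Lemma Pdet_minor_terms (g : {ffun 'I_n -> 'I_m}) :
  (Pdet G g)%:~R = \sum_(s : 'S_n) minor_term [ffun i => g (s i)].
Proof.
have Ecols : (\det (\matrix_(i, j) (@rvec int n (G (g j)) 0 i)))%:~R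
    = \det (\matrix_(i, j) reaction_mx (g i) j) :> R.
  rewrite -det_map_mx -det_tr; congr (\det _); apply/matrixP => i j.
  by rewrite !mxE rmorphB /= !rmorph_nat.
rewrite /Pdet rmorphM /= Ecols -det_map_mx {1}/determinant big_distrl /=.
apply: eq_bigr => s _; rewrite /minor_term.
have -> : \matrix_(i, j) reaction_mx ([ffun i => g (s i)] i) j =
    \matrix_(i, j) (\matrix_(i, j) reaction_mx (g i) j) (s i) j.
  by apply/matrixP => i j; rewrite !mxE ffunE.
rewrite det_permute_rows -mulrA mulrCA; congr (_ * _).
under eq_bigr do rewrite !mxE.
by under [RHS]eq_bigr do rewrite ffunE.
Qed.

Lemma Pdet_sum_det (w : 'I_m -> R) :
  n`!%:R * \det (reactant_mx w *m reaction_mx) = Pdet_sum w.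
Proof.
rewrite /Pdet_sum.
under eq_bigr do rewrite Pdet_minor_terms big_distrr /=.
rewrite exchange_big /=.
transitivity (\sum_(s : 'S_n) \det (reactant_mx w *m reaction_mx)).
  by rewrite sumr_const card_Sn mulr_natl.
apply: eq_bigr => s _.
rewrite det_reactant_reaction.
pose h (g : {ffun 'I_n -> 'I_m}) := [ffun i => g ((s^-1)%g i)].
have hinj : injective h.
  by move=> g1 g2 /ffunP e; apply/ffunP => i; have := e (s i); rewrite !ffunE permK.
rewrite [RHS](reindex_inj hinj); apply: eq_bigr => g _; congr (_ * minor_term _).
  by rewrite [RHS](reindex_perm s); apply: eq_bigr => i _; rewrite ffunE permK.
by apply/ffunP => i; rewrite !ffunE permK.
Qed.

End Expansion.
Arguments reaction_mx {R n m} G.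

Lemma sum_small_weights (R : realFieldType) (I : finType) (P : pred I)
    (W c : I -> R) (e : R) : 0 <= e ->
  (forall i, P i -> W i = 1) -> (forall i, ~~ P i -> 0 <= W i <= e) ->
  \sum_(i | P i) c i - e * \sum_i `|c i| <= \sum_i W i * c i.
Proof.
move=> e_ge0 W1 We.
have sumP : \sum_(i | P i) W i * c i = \sum_(i | P i) c i.
  by apply: eq_bigr => i Pi; rewrite W1 ?mul1r.
have sumNP : - (e * \sum_(i | ~~ P i) `|c i|) <= \sum_(i | ~~ P i) W i * c i.
  rewrite mulr_sumr -sumrN; apply: ler_sum => i /We /andP[W0 We_i].
  have /andP[cl cu] : - `|c i| <= c i <= `|c i| by rewrite -ler_norml.
  have := normr_ge0 (c i); nra.
have massNP : \sum_(i | ~~ P i) `|c i| <= \sum_i `|c i|.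
  rewrite [leRHS](bigID P) /= lerDr; exact: sumr_ge0.
rewrite [X in _ <= X](bigID P) /= sumP.
have := ler_wpM2l e_ge0 massNP; lra.
Qed.

Section PdetSumSigns.
Variables (R : rcfType) (n m : nat) (G : 'I_m -> reaction n).
Local Notation F := (@Pdet_sum R n m G).

Lemma eq_Pdet_sum (w w' : 'I_m -> R) : w =1 w' -> F w = F w'.
Proof.
by move=> e; apply: eq_bigr => f _; congr (_ * _); apply: eq_bigr => i _; rewrite e.
Qed.

(* If all nonzero Pdet share the sign of Pdet s0 != 0, then at positive weights
   every term of F has that sign and the term of s0 is nonzero. *)
Lemma Pdet_sum_sign (s0 : 'I_n -> 'I_m) (w : 'I_m -> R) :
  positive_weights w -> Pdet G s0 != 0 ->
  (forall t : 'I_n -> 'I_m, Pdet G t != 0 -> sgz (Pdet G t) = sgz (Pdet G s0)) ->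
  0 < (sgz (Pdet G s0))%:~R * F w.
Proof.
move=> wp ns0 same_sign; rewrite /Pdet_sum mulr_sumr.
under eq_bigr do rewrite mulrCA -intrM.
have term_ge0 (f : {ffun 'I_n -> 'I_m}) : 0 <= sgz (Pdet G s0) * Pdet G f.
  have [->|nf] := eqVneq (Pdet G f) 0; first by rewrite mulr0.
  by rewrite -(same_sign _ nf) -abszEsg.
pose fs := [ffun i => s0 i].
have Efs : Pdet G fs = Pdet G s0 by apply: eq_Pdet => i; rewrite ffunE.
rewrite (bigD1 fs) //=; apply: ltr_pwDl.
  by rewrite mulr_gt0 ?prodr_gt0 // ltr0z Efs -abszEsg ltz_nat absz_gt0.
by apply: sumr_ge0 => f _; rewrite mulr_ge0 ?prodr_ge0 ?ler0z // => i _; apply: ltW.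
Qed.

(* Conversely every nonzero Pdet s is "seen" by F: putting weight 1 on the
   reactions of s and a small weight e elsewhere gives F the sign of Pdet s. *)
Lemma Pdet_sum_realizes (s : 'I_n -> 'I_m) :
  Pdet G s != 0 -> exists w : 'I_m -> R,
    positive_weights w /\ 0 < (Pdet G s)%:~R * F w.
Proof.
move=> ns; have sinj := Pdet_neq0_inj ns.
pose p : R := (Pdet G s)%:~R; pose c (f : {ffun 'I_n -> 'I_m}) := p * (Pdet G f)%:~R.
pose inS (f : {ffun 'I_n -> 'I_m}) := [forall i, f i \in codom s].
pose K := \sum_(f : {ffun 'I_n -> 'I_m}) `|c f|.
pose fs := [ffun i => s i].
have p2_gt0 : 0 < p * p by rewrite -expr2 exprn_even_gt0 // intr_eq0.
have c_fs : c fs = p * p.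
  by rewrite /c; congr (_ * _%:~R); apply: eq_Pdet => i; rewrite ffunE.
have fsS : inS fs by apply/forallP => i; rewrite ffunE codom_f.
have K_ge : p * p <= K.
  rewrite /K (bigD1 fs) //= c_fs (ger0_norm (ltW p2_gt0)) lerDl; exact: sumr_ge0.
have mass_S : p * p <= \sum_(f | inS f) c f.
  rewrite (bigD1 fs) //= c_fs lerDl; apply: sumr_ge0 => f /andP[/forallP fS _].
  by rewrite /c; case: (Pdet_codom G sinj fS) => ->; rewrite ?mulr0 // -expr2 sqr_ge0.
pose e := p * p / (K *+ 2).
have K_gt0 : 0 < K by lra.
have e_gt0 : 0 < e by rewrite divr_gt0 // pmulrn_lgt0.
have e_le1 : e <= 1 by rewrite ler_pdivrMr ?pmulrn_lgt0 // mul1r mulr2n; lra.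
have eK : e * K = p * p / 2 by rewrite /e -mulr_natr; field; rewrite gt_eqF.
pose w r := if r \in codom s then 1 else e.
have wp : positive_weights w by move=> r; rewrite /w; case: ifP.
exists w; split => //.
have W1 f : inS f -> \prod_i w (f i) = 1.
  by move/forallP=> fS; apply: big1 => i _; rewrite /w fS.
have We f : ~~ inS f -> 0 <= \prod_i w (f i) <= e.
  rewrite negb_forall => /existsP[i0 ni0].
  rewrite prodr_ge0 => [|i _]; last exact: ltW.
  rewrite (bigD1 i0) //= {1}/w (negPf ni0) -[leRHS]mulr1 ler_wpM2l ?(ltW e_gt0) //.
  by apply: prodr_ile1 => i _; rewrite /w; case: ifP => _;
    rewrite ?ler01 ?lexx ?(ltW e_gt0) ?e_le1.
rewrite /Pdet_sum mulr_sumr; under eq_bigr do rewrite mulrCA.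
apply: lt_le_trans
  (@sum_small_weights R _ inS (fun f => \prod_i w (f i)) c e (ltW e_gt0) W1 We).
rewrite -/K; lra.
Qed.

(* F is a polynomial along the segment between two positive weight vectors,
   so it vanishes at some positive weights if it changes sign. *)
Lemma Pdet_sum_ivt (w1 w2 : 'I_m -> R) :
  positive_weights w1 -> positive_weights w2 -> F w1 <= 0 <= F w2 ->
  exists w : 'I_m -> R, positive_weights w /\ F w = 0.
Proof.
move=> p1 p2 hF.
pose seg x r := (1 - x) * w1 r + x * w2 r.
pose q : {poly R} := \sum_(f : {ffun 'I_n -> 'I_m})
  (\prod_i ((1 - 'X) * (w1 (f i))%:P + 'X * (w2 (f i))%:P)) * ((Pdet G f)%:~R)%:P.
have qE x : q.[x] = F (seg x).
  rewrite horner_sum; apply: eq_bigr => f _.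
  rewrite hornerM hornerC horner_prod; congr (_ * _).
  by apply: eq_bigr => i _; rewrite !hornerE.
have q01 : q.[0] <= 0 <= q.[1].
  rewrite !qE (@eq_Pdet_sum (seg 0) w1) ?(@eq_Pdet_sum (seg 1) w2) // => r;
    rewrite /seg; ring.
have [x /andP[x0 x1] /rootP qx] := poly_ivt ler01 q01.
exists (seg x); split; last by rewrite -qE.
by move=> r; rewrite /seg; have := p1 r; have := p2 r; nra.
Qed.

Lemma Pdet_sum_constant_sign (w1 w2 : 'I_m -> R) :
  (forall w : 'I_m -> R, positive_weights w -> F w != 0) ->
  positive_weights w1 -> positive_weights w2 -> 0 < F w1 * F w2.
Proof.
move=> F_neq0 p1 p2; rewrite ltNge; apply/negP => F12_le0.
have := F_neq0 _ p1; have := F_neq0 _ p2; rewrite !neq_lt => F2_neq0 F1_neq0.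
have [w [wp Fw0]] : exists w, positive_weights w /\ F w = 0.
  have [F2_ge0 | F2_lt0] := lerP 0 (F w2).
    apply: Pdet_sum_ivt p1 p2 _; apply/andP; split => //.
    by case/orP: F2_neq0 => ?; nra.
  by apply: Pdet_sum_ivt p2 p1 _; apply/andP; split; rewrite ?ltW //; nra.
by move: (F_neq0 _ wp); rewrite Fw0 eqxx.
Qed.

Lemma Pdet_sum_neq0P :
  (forall w : 'I_m -> R, positive_weights w -> F w != 0) <->
  ((forall s t : 'I_n -> 'I_m, injective s -> injective t ->
       Pdet G s != 0 -> Pdet G t != 0 -> sgz (Pdet G s) = sgz (Pdet G t)) /\
    (exists s : 'I_n -> 'I_m, injective s /\ Pdet G s != 0)).
Proof.
split=> [F_neq0 | [same_sign [s0 [_ ns0]]] w wp]; last first.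
  have := Pdet_sum_sign wp ns0 (fun t nt =>
    same_sign t s0 (Pdet_neq0_inj nt) (Pdet_neq0_inj ns0) nt ns0).
  by apply: contraTneq => ->; rewrite mulr0 ltxx.
split=> [s t _ _ ns nt | ].
  have [w1 [p1 h1]] := Pdet_sum_realizes ns.
  have [w2 [p2 h2]] := Pdet_sum_realizes nt.
  have F12 := Pdet_sum_constant_sign F_neq0 p1 p2.
  have st_gt0 : 0 < (Pdet G s)%:~R * (Pdet G t)%:~R :> R.
    rewrite -(pmulr_lgt0 _ (mulr_gt0 F12 F12)).
    have -> : (Pdet G s)%:~R * (Pdet G t)%:~R * (F w1 * F w2 * (F w1 * F w2)) =
      ((Pdet G s)%:~R * F w1) * ((Pdet G t)%:~R * F w2) * (F w1 * F w2) :> R by ring.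
    by rewrite mulr_gt0 // mulr_gt0.
  have := gtr0_sgz st_gt0; rewrite sgzM !sgz_int => /eqP.
  by rewrite mulz_sg_eq1 => /andP[_ /eqP].
case: (pickP (fun f : {ffun 'I_n -> 'I_m} => Pdet G f != 0)) => [f nf | all0].
  by exists (fun i => f i); split => //; apply: Pdet_neq0_inj nf.
have := F_neq0 (fun _ => 1) (fun _ => ltr01).
rewrite /Pdet_sum big1 ?eqxx // => f _.
by move/negbFE/eqP: (all0 f) => ->; rewrite mulr0.
Qed.

End PdetSumSigns.

Section ExpSlope.
Variable R : realType.

Definition exp_slope (a : R) : R := if a == 0 then 1 else (expR a - 1) / a.

Lemma exp_slope_gt0 (a : R) : 0 < exp_slope a.
Proof.
rewrite /exp_slope; case: eqVneq => [_|a0]; first exact: ltr01.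
case: (ltrgt0P a) => ha; last by move: a0; rewrite ha eqxx.
- by rewrite divr_gt0 // subr_gt0 expR_gt1.
- by rewrite -mulrNN -invrN opprB divr_gt0 ?oppr_gt0 // subr_gt0 expR_lt1.
Qed.

Lemma exp_slopeE (a : R) : expR a - 1 = exp_slope a * a.
Proof.
rewrite /exp_slope; case: eqVneq => [->|a0]; first by rewrite expR0 subrr mulr0.
by rewrite divfK.
Qed.

End ExpSlope.

Section MassActionShift.
Variables (R : realType) (n m : nat) (G : 'I_m -> reaction n).

(* The point x e^d (componentwise); any positive x' is exp_shift x d with
   d = ln x' - ln x. *)
Definition exp_shift (x d : 'rV[R]_n) : 'rV[R]_n := \row_j (x 0 j * expR (d 0 j)).

Definition reactant_dot (d : 'rV[R]_n) (r : 'I_m) : R :=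
  \sum_j d 0 j * ((G r).1 0 j)%:R.

Lemma monom_exp_shift (x d : 'rV[R]_n) (y : 'rV[nat]_n) :
  monom (exp_shift x d) y = monom x y * expR (\sum_j d 0 j * (y 0 j)%:R).
Proof.
rewrite /monom expR_sum -big_split; apply: eq_bigr => j _.
by rewrite mxE exprMn expRM_natr.
Qed.

Lemma mulmx_reactant_reaction (w : 'I_m -> R) (d : 'rV[R]_n) :
  d *m (reactant_mx G w *m reaction_mx G) =
  \sum_r (w r * reactant_dot d r) *: @rvec R n (G r).
Proof.
rewrite mulmxA mulmx_sum_row; apply: eq_bigr => r _; congr (_ *: _).
  by rewrite !mxE /reactant_dot mulr_sumr; apply: eq_bigr => j _; rewrite mxE mulrCA.
by apply/rowP => j; rewrite !mxE.
Qed.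

Lemma mass_action_exp_shift (k : 'I_m -> R) (x d : 'rV[R]_n) :
  mass_action G k (exp_shift x d) - mass_action G k x =
  d *m (reactant_mx G (fun r => k r * monom x (G r).1 * exp_slope (reactant_dot d r))
        *m reaction_mx G).
Proof.
rewrite mulmx_reactant_reaction /mass_action -sumrB; apply: eq_bigr => r _.
rewrite -scalerBl monom_exp_shift -/(reactant_dot d r) -mulrA -mulrBr.
by rewrite -[X in _ - X]mulr1 -mulrBr exp_slopeE !mulrA.
Qed.

Lemma pos_orthantP (x : 'rV[R]_n) :
  reflect (forall j, 0 < x 0 j) (x \in @pos_orthant R n).
Proof. by rewrite inE; apply: forallP. Qed.

(* A singular matrix reactant_mx w *m reaction_mx, with kernel vector d, yields
   rate constants k for which f takes the same value at 1 and at e^d. *)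
Lemma nonsingular_of_injective : injective_network R G ->
  forall w : 'I_m -> R, positive_weights w ->
    \det (reactant_mx G w *m reaction_mx G) != 0.
Proof.
move=> inj w wp; apply/negP => /det0P[d d_neq0 dM].
pose one : 'rV[R]_n := \row_j 1.
pose k r := w r / exp_slope (reactant_dot d r).
have kw r : k r * monom one (G r).1 * exp_slope (reactant_dot d r) = w r.
  rewrite /monom big1 => [|j _]; last by rewrite mxE expr1n.
  by rewrite mulr1 divfK // gt_eqF ?exp_slope_gt0.
have k_pos r : 0 < k r by rewrite divr_gt0 ?exp_slope_gt0.
have one_pos : one \in @pos_orthant R n by apply/pos_orthantP => j; rewrite mxE.
have shift_pos : exp_shift one d \in @pos_orthant R n.
  by apply/pos_orthantP => j; rewrite !mxE mul1r expR_gt0.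
have f_eq : mass_action G k (exp_shift one d) = mass_action G k one.
  apply/eqP; rewrite -subr_eq0 mass_action_exp_shift.
  suff -> : reactant_mx G (fun r => k r * monom one (G r).1 *
      exp_slope (reactant_dot d r)) = reactant_mx G w by rewrite dM.
  by apply/matrixP => i r; rewrite !mxE kw.
move/rowP: (inj k k_pos _ _ shift_pos one_pos f_eq) => e.
case/eqP: d_neq0; apply/rowP => j; move: (e j).
by rewrite !mxE mul1r -expR0 => /expR_inj.
Qed.

(* Conversely, if f(x) = f(x') then d = ln x' - ln x lies in the kernel of the
   matrix attached to the weights of mass_action_exp_shift, so d = 0. *)
Lemma injective_of_nonsingular :
  (forall w : 'I_m -> R, positive_weights w ->
     \det (reactant_mx G w *m reaction_mx G) != 0) ->
  injective_network R G.
Proof.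
move=> det_neq0 k k_pos x x' /pos_orthantP xp /pos_orthantP x'p fxx'.
pose d : 'rV[R]_n := \row_j (ln (x' 0 j) - ln (x 0 j)).
have x'E : x' = exp_shift x d.
  apply/rowP => j; rewrite !mxE expRB !lnK ?posrE //.
  by rewrite mulrCA divff ?mulr1 // gt_eqF.
pose w r := k r * monom x (G r).1 * exp_slope (reactant_dot d r).
have wp r : 0 < w r.
  rewrite !mulr_gt0 ?k_pos ?exp_slope_gt0 //.
  by apply: prodr_gt0 => j _; rewrite exprn_gt0.
have dM : d *m (reactant_mx G w *m reaction_mx G) = 0.
  by rewrite -mass_action_exp_shift -x'E fxx' subrr.
have d0 : d = 0.
  by apply: contraTeq (det_neq0 w wp) => d_neq0; apply/negPn/det0P; exists d.
apply/rowP => j; move/rowP: d0 => /(_ j); rewrite !mxE => /eqP; rewrite subr_eq0.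
by move=> /eqP/ln_inj -> //; rewrite posrE.
Qed.

End MassActionShift.

Theorem corollary2p2 (R : realType) (n m : nat) (G : 'I_m -> reaction n) :
  is_network G ->
  (injective_network R G <->
   ((forall s t : 'I_n -> 'I_m, injective s -> injective t ->
       Pdet G s != 0 -> Pdet G t != 0 -> sgz (Pdet G s) = sgz (Pdet G t)) /\
    (exists s : 'I_n -> 'I_m, injective s /\ Pdet G s != 0))).
Proof.
move=> _; rewrite -(@Pdet_sum_neq0P R n m G).
have nfact_neq0 : n`!%:R != 0 :> R by rewrite pnatr_eq0 -lt0n fact_gt0.
split=> [/nonsingular_of_injective nonsingular | F_neq0].
  by move=> w wp; rewrite -(Pdet_sum_det G w) mulf_neq0 ?nonsingular.
apply: injective_of_nonsingular => w wp; move: (F_neq0 w wp).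
by rewrite -(Pdet_sum_det G w) mulf_eq0 negb_or => /andP[].
Qed.
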